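(* Let $v,w\ge 1$ be integers and $e$ a real number, and let $P(v,w,e)=e^3-(v+w)e^2+2vwe-v^2w^2$. If $P(v,w,e)\le 0$, then $P(v+1,w,e+1)\le 0$. *)

From Stdlib Require Import Reals Lra Lia.
Open Scope R_scope.

Definition P (v w e : R) : R :=
  e ^ 3 - (v + w) * e ^ 2 + 2 * v * w * e - v ^ 2 * w ^ 2.

From Stdlib Require Import Reals Lra Psatz.
Open Scope R_scope.

(* With t = e - a, P(a,b,e) = t (e^2 - b t) - a^2 b (b - 1), so P <= 0 as soon
   as e <= a; this settles the case e <= a.  For e > a write
   P(a+1,b,e+1) = P(a,b,e) + D with D = t (2e + 1) - (2a + 1) b (b - 1).  If D
   were positive, the combination (2a+1) P - a^2 D = t^2 ((2a+1)(a+e-b) - 2a^2),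
   negative because P <= 0 < D, would force e < b; but for a < e < b the
   increment D is nonpositive. *)

Definition P_incr (a b e : R) : R :=
  (e - a) * (2 * e + 1) - (2 * a + 1) * (b * (b - 1)).

Lemma P_shiftE (a b e : R) :
  P a b e = (e - a) * (e ^ 2 - b * (e - a)) - a ^ 2 * (b * (b - 1)).
Proof. unfold P; ring. Qed.

Lemma P_succE (a b e : R) : P (a + 1) b (e + 1) = P a b e + P_incr a b e.
Proof. unfold P, P_incr; ring. Qed.

Lemma P_incr_combinationE (a b e : R) :
  (2 * a + 1) * P a b e - a ^ 2 * P_incr a b e
  = (e - a) ^ 2 * ((2 * a + 1) * (a + e - b) - 2 * a ^ 2).
Proof. unfold P, P_incr; ring. Qed.

Lemma P_nonpos_of_le (a b e : R) : 1 <= b -> e <= a -> P a b e <= 0.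
Proof.
  intros hb hea; rewrite P_shiftE.
  assert (hquad : 0 <= e ^ 2 - b * (e - a)) by nra.
  assert (hs : 0 <= b * (b - 1)) by nra.
  nra.
Qed.

Lemma lt_of_P_nonpos_incr_pos (a b e : R) :
  0 < a -> a < e -> P a b e <= 0 -> 0 < P_incr a b e -> e < b.
Proof.
  intros ha hae hP hD.
  pose proof (P_incr_combinationE a b e) as hcomb.
  assert (hPa : (2 * a + 1) * P a b e <= 0) by nra.
  assert (hDa : 0 < a ^ 2 * P_incr a b e) by (apply Rmult_lt_0_compat; nra).
  assert (hneg : (e - a) ^ 2 * ((2 * a + 1) * (a + e - b) - 2 * a ^ 2) < 0) by lra.
  assert (ht2 : 0 < (e - a) ^ 2) by nra.
  assert (hfac : (2 * a + 1) * (a + e - b) < 2 * a ^ 2) by nra.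
  nra.
Qed.

Lemma P_incr_nonpos (a b e : R) : 1 <= a -> a < e < b -> P_incr a b e <= 0.
Proof.
  intros ha [hae heb]; unfold P_incr.
  assert (hlt : (e - a) * (2 * e + 1) < (b - a) * (2 * b + 1)) by nra.
  (* (2a+1) b (b-1) - (b-a)(2b+1) = (a-1)(2b^2+1) + (b-1)^2 *)
  assert (hgap : (b - a) * (2 * b + 1) <= (2 * a + 1) * (b * (b - 1))) by nra.
  lra.
Qed.

Lemma P_succ_nonpos (a b e : R) :
  1 <= a -> 1 <= b -> P a b e <= 0 -> P (a + 1) b (e + 1) <= 0.
Proof.
  intros ha hb hP.
  destruct (Rle_or_lt e a) as [hea | hae].
  - apply P_nonpos_of_le; lra.
  - rewrite P_succE.
    destruct (Rle_or_lt (P_incr a b e) 0) as [hD | hD]; [lra |].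
    assert (heb : e < b) by (apply (lt_of_P_nonpos_incr_pos a b e); lra).
    pose proof (P_incr_nonpos a b e ha (conj hae heb)); lra.
Qed.

Theorem lemma4p7 (v w : nat) (e : R) (hv : (1 <= v)%nat) (hw : (1 <= w)%nat) :
  P (INR v) (INR w) e <= 0 -> P (INR v + 1) (INR w) (e + 1) <= 0.
Proof.
  apply P_succ_nonpos.
  - exact (le_INR 1 v hv).
  - exact (le_INR 1 w hw).
Qed.
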